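(* Let $\phi:\mathbb{R}^{d}\to\mathbb{R}^{d}$ be a $C^{2}$ diffeomorphism, $x_{1},y_{1}\in\mathbb{R}^{d}$, $x_{j}=\phi^{j-1}(x_{1})$, $y_{j}=\phi^{j-1}(y_{1})$. Then the following matrices have rank equal to their number of rows: (a) the matrix $\binom{V(x_{1})}{V(y_{1})}$, provided $x_{1},\ldots,x_{D-1},y_{1},\ldots,y_{D-1}$ are distinct; (b) the matrix $\binom{V(x_{1})}{\mathfrak{m}_{k}}$, where $\mathfrak{m}_{k}$ consists of the first $k$ rows of $V(y_{1})$, provided $x_{1},\ldots,x_{D-1},y_{1},\ldots,y_{k}$ are distinct; (c) for an integer $D^{+}\leq2D$, the $(D^{+}-1)\times D_{\alpha}$ matrix whose rows $j=1,\ldots,D^{+}-1$ are the gradients with respect to $c$ at $c=0$ of $c\mapsto\pi_{1}\phi_{c}^{j}(x_{1})$, provided $x_{1},\ldots,x_{D^{+}-1}$ are distinct.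
   Context: $\pi_{1}$ is the first coordinate projection, $\mathbf{e}_{1}=(1,0,\ldots,0)$. For a multi-index $\alpha\in\mathbb{Z}_{\geq0}^{d}$, $p_{\alpha}(x)=\prod_i(\pi_{i}x)^{\alpha_{i}}$; $\mathcal{I}_{2D-1}$ is the set of multi-indices with $|\alpha|\leq2D-1$, of cardinality $D_{\alpha}$. For $c=(c_{\alpha})\in\mathbb{R}^{D_{\alpha}}$, $\phi_{c}(x)=\phi(x)+\mathbf{e}_{1}\sum_{\alpha\in\mathcal{I}_{2D-1}}c_{\alpha}p_{\alpha}(x)$. For $z\in\mathbb{R}^{d}$, $V(z)$ is the $(D-1)\times D_{\alpha}$ matrix whose row $j$ ($j=1,\ldots,D-1$) is the gradient with respect to $c$ at $c=0$ of $c\mapsto\pi_{1}\phi_{c}^{j}(z)$. *)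

From HB Require Import structures.
From mathcomp Require Import all_boot all_order all_algebra.
From mathcomp Require Import all_classical all_reals all_analysis.
Set Implicit Arguments. Unset Strict Implicit. Unset Printing Implicit Defensive.
Import Order.TTheory GRing.Theory Num.Theory.
Import numFieldNormedType.Exports.
Local Open Scope ring_scope.

Section Defs.
Variables (R : realType) (d D : nat).

Definition ej (i : 'I_d) : 'rV[R]_d := delta_mx 0 i.

(* e1 = (1,0,...,0) and first coordinate projection (d >= 1 assumed in the theorem) *)
Definition e1 : 'rV[R]_d := \row_(i < d) ((val i == 0%N)%:R).
Definition pi1 (x : 'rV[R]_d) : R := \sum_(i < d | val i == 0%N) x 0 i.

Definition C2 (f : 'rV[R]_d -> 'rV[R]_d) : Prop :=
  [/\ forall x i, derivable f x (ej i),
      forall i, continuous ('D_(ej i) f),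
      forall i j x, derivable ('D_(ej i) f) x (ej j)
    & forall i j, continuous ('D_(ej j) ('D_(ej i) f))].

Definition C2_diffeo (f : 'rV[R]_d -> 'rV[R]_d) : Prop :=
  exists g, [/\ cancel f g, cancel g f, C2 f & C2 g].

(* multi-indices alpha in Z_{>=0}^d with |alpha| <= 2D-1 *)
Definition mindex := {a : {ffun 'I_d -> 'I_(2 * D)} | (\sum_i val (a i) < 2 * D)%N}.
Definition Dalpha := #|{: mindex}|.

Definition palpha (a : mindex) (x : 'rV[R]_d) : R := \prod_i (x 0 i) ^+ val (val a i).

Definition phic (phi : 'rV[R]_d -> 'rV[R]_d) (c : 'rV[R]_Dalpha) (x : 'rV[R]_d) :=
  phi x + (\sum_(a : mindex) c 0 (enum_rank a) * palpha a x) *: e1.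

Definition Gmat (phi : 'rV[R]_d -> 'rV[R]_d) (n : nat) (z : 'rV[R]_d) : 'M[R]_(n, Dalpha) :=
  \matrix_(j < n, k < Dalpha)
     'D_(delta_mx 0 k : 'rV[R]_Dalpha) (fun c => pi1 (iter j.+1 (phic phi c) z)) 0.

Definition Vmat phi z := Gmat phi (D - 1) z.

Definition mfirst phi k (hk : (k <= D - 1)%N) y : 'M[R]_(k, Dalpha) :=
  \matrix_(i < k) row (widen_ord hk i) (Vmat phi y).

Definition orbit_seq (phi : 'rV[R]_d -> 'rV[R]_d) (n : nat) x :=
  [seq iter i phi x | i <- iota 0 n].

End Defs.

From HB Require Import structures.
From mathcomp Require Import all_boot all_order all_algebra.
From mathcomp Require Import all_classical all_reals all_analysis.
From mathcomp Require Import ring zify.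
Import Order.TTheory GRing.Theory Num.Theory.
Import numFieldNormedType.Exports.
Set Implicit Arguments. Unset Strict Implicit. Unset Printing Implicit Defensive.

(* Differentiating t |-> phi_(t c)^(j+1)(z) at t = 0 gives the recursion
   v_(j+1) = dphi(z_j) v_j + p_c(z_j) e1 with z_j = phi^j(z) and p_c the
   perturbation polynomial, v_0 = 0. Hence row j of each gradient matrix is the
   row of monomial values at z_j plus a combination of the monomial rows at
   z_0, ..., z_(j-1): the matrix is a unitriangular transform of a matrix of
   monomial evaluations. At at most 2D distinct points these rows are
   independent, since a product of at most 2D - 1 affine forms (Lagrange
   interpolation) separates each point from the others. Differentiability of
   phi, needed for the chain rule, follows from continuity of its partial
   derivatives. *)

Local Open Scope ring_scope.
Local Open Scope classical_set_scope.

Section RowNorm.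
Variables (R : realType) (n : nat).
Implicit Types (M : 'rV[R]_n).

Lemma row_norm_le M (c : R) : 0 <= c -> (forall j, `|M 0 j| <= c) -> `|M| <= c.
Proof.
move=> c0 Mc; rewrite [leLHS]/Num.Def.normr /= mx_normrE.
by apply: bigmax_le => // -[i j] _ /=; rewrite (ord1 i).
Qed.

Lemma row_entry_le_norm M j : `|M 0 j| <= `|M|.
Proof.
by rewrite [leRHS]/Num.Def.normr /= mx_normrE; apply: (le_bigmax _ _ (0, j)).
Qed.

Lemma row_coord_continuous j : continuous (fun M : 'rV[R]_n => M 0 j).
Proof. by move=> M; apply/differentiable_continuous/differentiable_coord. Qed.

End RowNorm.

Section ContinuousPartials.
Variables (R : realType) (d m : nat).
Implicit Types (f : 'rV[R]_d -> 'rV[R]_m) (p v x h : 'rV[R]_d).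

Lemma is_derive_line_coord f p v j (s : R) : derivable f (p + s *: v) v ->
  is_derive s 1 (fun s : R => f (p + s *: v) 0 j) ('D_v f (p + s *: v) 0 j).
Proof.
set g := fun s : R => f (p + s *: v) 0 j; set y := p + s *: v => fy.
have cvg_quot : (fun h : R => h^-1 *: ((g \o shift s) (h *: 1) - g s)) @ 0^' --> 'D_v f y 0 j.
  have -> : (fun h : R => h^-1 *: ((g \o shift s) (h *: 1) - g s)) =
      (fun M : 'rV[R]_m => M 0 j) \o (fun h : R => h^-1 *: ((f \o shift y) (h *: v) - f y)).
    apply/funext => h /=; rewrite !mxE /g /y [h *: 1]mulr1 scalerDl addrCA addrA.
    by congr (_ * (_ - _)).
  exact: continuous_cvg _ (@row_coord_continuous R m j ('D_v f y)) fy.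
by apply: DeriveDef; [exact: (cvgP _ cvg_quot)|exact: cvg_lim cvg_quot].
Qed.

Lemma mvt_line_coord f p v j (h : R) : (forall s : R, derivable f (p + s *: v) v) ->
  exists2 t : R, `|t| <= `|h| & f (p + h *: v) 0 j - f p 0 j = h * 'D_v f (p + t *: v) 0 j.
Proof.
move=> fv; set g := fun s : R => f (p + s *: v) 0 j.
have g_is_derive (s : R) : is_derive s 1 g ('D_v f (p + s *: v) 0 j).
  exact: is_derive_line_coord.
have g_cont : continuous g.
  move=> s; apply/differentiable_continuous/derivable1_diffP.
  by have [] := g_is_derive s.
have g0 : g 0 = f p 0 j by rewrite /g scale0r addr0.
have [h0|h0] := leP 0 h.
  have [t /andP[t0 th] E] := MVT_segment h0 (fun s _ => g_is_derive s)
    (continuous_subspaceT g_cont).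
  exists t; first by rewrite !ger0_norm // (le_trans t0 th).
  by rewrite -g0 -/(g h) E subr0 mulrC.
have [t /andP[ht t0] E] := MVT_segment (ltW h0) (fun s _ => g_is_derive s)
  (continuous_subspaceT g_cont).
exists t; first by rewrite !ler0_norm ?lerN2 // ltW.
by rewrite -g0 -/(g h) -opprB E sub0r mulrN opprK mulrC.
Qed.

Definition coord_prefix (h : 'rV[R]_d) (k : nat) : 'rV[R]_d :=
  \row_(i < d) if (i < k)%N then h 0 i else 0.

Lemma coord_prefix0 h : coord_prefix h 0 = 0.
Proof. by apply/rowP => i; rewrite !mxE. Qed.

Lemma coord_prefix_full h : coord_prefix h d = h.
Proof. by apply/rowP => i; rewrite mxE ltn_ord. Qed.

Lemma coord_prefixS h (i : 'I_d) :
  coord_prefix h i.+1 = coord_prefix h i + h 0 i *: ej R i.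
Proof.
apply/rowP => l; rewrite !mxE ltnS leq_eqVlt.
have [->|li] := eqVneq l i; first by rewrite eqxx ltnn mulr1 add0r.
by rewrite (inj_eq val_inj) (negbTE li) /= mulr0 addr0.
Qed.

Lemma norm_coord_prefix_line_le h (i : 'I_d) (t : R) : `|t| <= `|h 0 i| ->
  `|coord_prefix h i + t *: ej R i| <= `|h|.
Proof.
move=> th; apply: row_norm_le => // l; rewrite !mxE.
have [->|li] := eqVneq l i; first by rewrite ltnn mulr1 add0r (le_trans th) ?row_entry_le_norm.
rewrite mulr0 addr0; case: ifP => _; last by rewrite normr0.
exact: row_entry_le_norm.
Qed.

(* Telescope along the path x + coord_prefix h k, k = 0..d, and apply the mean
   value theorem coordinatewise on each of its axis-parallel segments. *)
Lemma partials_increment_le f x (del eps : R) h :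
  (forall y i, derivable f y (ej R i)) ->
  (forall y i, `|y - x| < del -> `|'D_(ej R i) f y - 'D_(ej R i) f x| <= eps) ->
  `|h| < del ->
  `|f (h + x) - f x - \sum_(i < d) h 0 i *: 'D_(ej R i) f x| <= d%:R * (`|h| * eps).
Proof.
move=> fd fc hdel; pose p k := x + coord_prefix h k.
have -> : f (h + x) - f x = \sum_(i < d) (f (p i.+1) - f (p i)).
  rewrite -(big_mkord xpredT (fun k => f (p k.+1) - f (p k))) telescope_sumr //.
  by rewrite /p coord_prefix_full coord_prefix0 addr0 [x + h]addrC.
have -> : d%:R * (`|h| * eps) = \sum_(i < d) `|h| * eps.
  by rewrite sumr_const card_ord mulr_natl.
rewrite -sumrB; apply: le_trans (ler_norm_sum _ _ _) _; apply: ler_sum => i _.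
have eps_ge0 : 0 <= eps.
  by apply: le_trans (fc x i _) => //; rewrite subrr normr0 (le_lt_trans _ hdel).
apply: row_norm_le => [|j]; first by rewrite mulr_ge0.
rewrite {1}/p coord_prefixS addrA -/(p i) !mxE.
have [t th ->] := mvt_line_coord j (h 0 i) (fun s => fd (p i + s *: ej R i) i).
rewrite -mulrBr normrM; apply: ler_pM => //; first exact: row_entry_le_norm.
have /(fc _ i) : `|p i + t *: ej R i - x| < del.
  rewrite /p addrAC (addrC x) addrK.
  exact: le_lt_trans (norm_coord_prefix_line_le th) hdel.
apply: le_trans.
by have := row_entry_le_norm ('D_(ej R i) f (p i + t *: ej R i) - 'D_(ej R i) f x) j; rewrite !mxE.
Qed.

Lemma continuous_partials_differentiable f :
  (forall y i, derivable f y (ej R i)) -> (forall i, continuous ('D_(ej R i) f)) ->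
  forall x, differentiable f x.
Proof.
move=> fd fc x.
pose Lf := fun w : 'rV[R]_d => \sum_(i < d) w 0 i *: 'D_(ej R i) f x.
have Lf_linear : linear Lf.
  move=> a u v; rewrite /Lf scaler_sumr -big_split; apply: eq_bigr => i _ /=.
  by rewrite !mxE scalerDl scalerA.
pose L : {linear 'rV[R]_d -> 'rV[R]_m} := HB.pack Lf (GRing.isLinear.Build _ _ _ _ Lf Lf_linear).
have L_cont : continuous L.
  move=> w; apply: differentiable_continuous.
  have -> : (L : _ -> _) = \sum_(i < d) (fun w : 'rV[R]_d => w 0 i *: 'D_(ej R i) f x).
    by rewrite fct_sumE.
  by apply: differentiable_sum => i; apply/differentiableZl/differentiable_coord.
have f_littleo : f \o shift x = cst (f x) + L +o_ (0 : 'rV[R]_d) id.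
  apply/eqaddoP => eps eps0.
  pose e' := eps / d.+1%:R.
  have e'0 : 0 < e' by rewrite divr_gt0.
  have : \forall y \near x, forall i, `|'D_(ej R i) f y - 'D_(ej R i) f x| <= e'.
    have near_i i : \forall y \near x, `|'D_(ej R i) f y - 'D_(ej R i) f x| <= e'.
      have := (@cvgrPdist_le _ _ _ (nbhs x) _ _ _).1 (fc i x) e' e'0.
      by move=> near_D; near=> y; rewrite distrC; near: y; exact: near_D.
    exact: filter_forall near_i.
  move=> /nbhs_ballP [del /= del0 Hdel].
  near=> h.
  have hdel : `|h| < del by near: h; rewrite !near_simpl; exact: nbhs0_lt.
  have fc_del y i : `|y - x| < del -> `|'D_(ej R i) f y - 'D_(ej R i) f x| <= e'.
    by move=> yx; apply: Hdel; rewrite -ball_normE /ball_ /= distrC.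
  rewrite /= opprD addrA.
  apply: le_trans (partials_increment_le fd fc_del hdel) _.
  rewrite mulrCA [eps * _]mulrC ler_wpM2l // /e' mulrCA ler_piMr ?(ltW eps0) //.
  by rewrite ler_pdivrMr // mul1r ler_nat.
apply/diff_locallyP; rewrite (diff_unique L_cont f_littleo); split => //.
Unshelve. all: by end_near.
Qed.

End ContinuousPartials.

Section LowerUnitriangular.
Variable F : fieldType.

(* Equivalently, G = T *m P for a lower unitriangular T. *)
Definition lower_unitri m n (G P : 'M[F]_(m, n)) :=
  forall i : 'I_m, (row i G - row i P <= \sum_(l < m | (l < i)%N) <<row l P>>)%MS.

Lemma row_free_lower_unitri m n (G P : 'M[F]_(m, n)) :
  lower_unitri G P -> row_free P -> row_free G.
Proof.
move=> GP P_free.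
have PG : (P <= G)%MS.
  suff rows_lt k (i : 'I_m) : (i < k)%N -> (row i P <= G)%MS.
    by apply/row_subP => i; apply: (rows_lt i.+1).
  elim: k i => [//|k IH] i; rewrite ltnS leq_eqVlt => /predU1P[ik|]; last exact: IH.
  rewrite -[row i P](subKr (row i G)) addmx_sub ?eqmx_opp ?row_sub //.
  apply: submx_trans (GP i) _; apply/sumsmx_subP => l li.
  by rewrite genmxE IH -?ik.
by rewrite /row_free eqn_leq rank_leq_row /= -{1}(eqP P_free) mxrankS.
Qed.

Lemma lower_unitri_col_mx m1 m2 n (G1 P1 : 'M[F]_(m1, n)) (G2 P2 : 'M[F]_(m2, n)) :
  lower_unitri G1 P1 -> lower_unitri G2 P2 -> lower_unitri (col_mx G1 G2) (col_mx P1 P2).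
Proof.
move=> GP1 GP2 i; rewrite -(splitK i); case: (fintype.split i) => [i1|i2].
- rewrite !rowKu; apply: submx_trans (GP1 i1) _.
  apply/sumsmx_subP => l li; apply: (sumsmx_sup (lshift m2 l)) => //.
  by rewrite rowKu.
- rewrite !rowKd; apply: submx_trans (GP2 i2) _.
  apply/sumsmx_subP => l li; apply: (sumsmx_sup (rshift m1 l)).
    by rewrite /= ltn_add2l.
  by rewrite rowKd.
Qed.

Lemma lower_unitri_prefix m n k (hk : (k <= m)%N) (G P : 'M[F]_(m, n)) :
  lower_unitri G P ->
  lower_unitri (\matrix_(i < k) row (widen_ord hk i) G) (\matrix_(i < k) row (widen_ord hk i) P).
Proof.
move=> GP i; rewrite !rowK; apply: submx_trans (GP _) _.
apply/sumsmx_subP => l li.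
have lk : (l < k)%N := ltn_trans li (ltn_ord i).
apply: (sumsmx_sup (Ordinal lk)) => //.
by rewrite rowK (_ : widen_ord hk _ = l) //; apply: val_inj.
Qed.

End LowerUnitriangular.

Section MonomialInterpolation.
Variables (R : realType) (d D : nat).
Implicit Types (x : 'rV[R]_d) (s : seq 'I_d) (f g : 'rV[R]_d -> R).

Definition monomial_row x : 'rV[R]_(Dalpha d D) := \row_k palpha (enum_val k) x.

Definition word_monomial s x : R := \prod_(c <- s) x 0 c.

Lemma word_monomialE s x : word_monomial s x = \prod_i x 0 i ^+ count_mem i s.
Proof.
elim: s => [|c s IH]; first by rewrite /word_monomial big_nil big1 // => i _; rewrite expr0.
rewrite /word_monomial big_cons -/(word_monomial s x) IH.
under [RHS]eq_bigr do rewrite exprD.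
rewrite big_split /=; congr (_ * _).
rewrite (bigD1 c) //= eqxx expr1 big1 ?mulr1 // => i ic.
by rewrite eq_sym (negbTE ic) expr0.
Qed.

Lemma sum_count_mem_ord s : (\sum_i count_mem i s)%N = size s.
Proof.
elim: s => [|c s IH] /=; first by rewrite big1.
rewrite big_split /= IH (bigD1 c) //= eqxx big1 // => i ic.
by rewrite eq_sym (negbTE ic).
Qed.

Lemma word_monomial_palpha s : (size s < 2 * D)%N ->
  exists a : mindex d D, word_monomial s =1 palpha a.
Proof.
move=> s_small.
have count_small i : (count_mem i s < 2 * D)%N := leq_ltn_trans (count_size _ _) s_small.
pose a := [ffun i => Ordinal (count_small i)].
have a_small : (\sum_i val (a i) < 2 * D)%N.
  by under eq_bigr do rewrite ffunE /=; rewrite sum_count_mem_ord.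
exists (exist _ a a_small) => x.
by rewrite word_monomialE; apply: eq_bigr => i _; rewrite ffunE.
Qed.

Definition poly_deg_le (m : nat) f :=
  exists t : seq (R * seq 'I_d), all (fun w => size w.2 <= m)%N t /\
    f =1 fun x => \sum_(w <- t) w.1 * word_monomial w.2 x.

Definition in_monomial_span f :=
  exists c : 'cV[R]_(Dalpha d D), f =1 fun x => (monomial_row x *m c) 0 0.

Lemma poly_deg_le_in_monomial_span m f : (m < 2 * D)%N ->
  poly_deg_le m f -> in_monomial_span f.
Proof.
move=> m_small [t [t_deg fE]].
suff [c cE] : in_monomial_span (fun x => \sum_(w <- t) w.1 * word_monomial w.2 x).
  by exists c => x; rewrite fE cE.
elim: t t_deg {fE} => [_|[b s] t IH /andP[/= s_deg /IH[c cE]]].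
  by exists 0 => x; rewrite big_nil mulmx0 mxE.
have [a aE] := word_monomial_palpha (leq_ltn_trans s_deg m_small).
exists (b *: delta_mx (enum_rank a) 0 + c) => x.
by rewrite big_cons cE mulmxDr -scalemxAr -colE !mxE enum_rankK aE.
Qed.

Lemma eq_poly_deg_le m f g : f =1 g -> poly_deg_le m f -> poly_deg_le m g.
Proof. by move=> fg [t [t_deg fE]]; exists t; split => // x; rewrite -fg fE. Qed.

Lemma poly_deg_le_cst m (b : R) : poly_deg_le m (fun=> b).
Proof. by exists [:: (b, [::])]; split => // x; rewrite big_seq1 /word_monomial big_nil mulr1. Qed.

Lemma poly_deg_le_affine (a b : R) (c : 'I_d) : poly_deg_le 1 (fun x => a * x 0 c + b).
Proof.
exists [:: (a, [:: c]); (b, [::])]; split => // x.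
by rewrite !big_cons big_nil /word_monomial big_seq1 big_nil mulr1 addr0.
Qed.

Lemma poly_deg_le_mul m1 m2 f g : poly_deg_le m1 f -> poly_deg_le m2 g ->
  poly_deg_le (m1 + m2) (fun x => f x * g x).
Proof.
move=> [t1 [t1_deg f_E]] [t2 [t2_deg g_E]].
exists [seq (w1.1 * w2.1, w1.2 ++ w2.2) | w1 <- t1, w2 <- t2]; split.
  apply/allP => _ /allpairsP[[w1 w2] [w1t w2t ->]] /=.
  by rewrite size_cat leq_add ?(allP t1_deg) ?(allP t2_deg).
move=> x; rewrite f_E g_E big_allpairs_dep mulr_suml; apply: eq_bigr => w1 _.
rewrite mulr_sumr; apply: eq_bigr => w2 _.
by rewrite /word_monomial big_cat /=; ring.
Qed.

Lemma poly_deg_le_prod (I : Type) (r : seq I) (F : I -> 'rV[R]_d -> R) :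
  (forall l, poly_deg_le 1 (F l)) -> poly_deg_le (size r) (fun x => \prod_(l <- r) F l x).
Proof.
move=> F_deg; elim: r => [|l r IH] /=.
  by apply: eq_poly_deg_le (poly_deg_le_cst 0 1) => x; rewrite big_nil.
by apply: eq_poly_deg_le (poly_deg_le_mul (F_deg l) IH) => x; rewrite big_cons.
Qed.

Lemma lagrange_in_monomial_span n (q : 'I_n -> 'rV[R]_d) (i : 'I_n) :
  (n <= 2 * D)%N -> injective q ->
  exists c : 'cV[R]_(Dalpha d D), forall j, (monomial_row (q j) *m c) 0 0 = (j == i)%:R.
Proof.
move=> n_small q_inj.
pose factor l : 'rV[R]_d -> R :=
  if [pick c | q i 0 c != q l 0 c] is Some c then
    fun x => (q i 0 c - q l 0 c)^-1 * x 0 c + - ((q i 0 c - q l 0 c)^-1 * q l 0 c)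
  else fun=> 1. (* only reached for l = i, which the product below omits *)
have factor_deg l : poly_deg_le 1 (factor l).
  by rewrite /factor; case: pickP => [c _|_]; [exact: poly_deg_le_affine|exact: poly_deg_le_cst].
have factor_at_i l : factor l (q i) = 1.
  rewrite /factor; case: pickP => // c qc.
  by rewrite -mulrBr mulVf ?subr_eq0.
have factor_at_l l : l != i -> factor l (q l) = 0.
  move=> li; rewrite /factor; case: pickP => [c _|no_c]; first by rewrite /= subrr.
  by case/eqP: li; apply: q_inj; apply/rowP => c; apply/esym/eqP/negbFE/no_c.
have deg_small : (size (enum (predC1 i)) < 2 * D)%N.
  by rewrite -cardE cardC1 card_ord (leq_trans _ n_small) // prednK // (leq_ltn_trans _ (ltn_ord i)).
have [c cE] := poly_deg_le_in_monomial_span deg_small (poly_deg_le_prod _ factor_deg).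
exists c => j; rewrite -cE.
have [->|ji] := eqVneq j i; first by rewrite big1 // => l _; exact: factor_at_i.
by rewrite (bigD1_seq j) ?mem_enum ?enum_uniq //= factor_at_l // mul0r.
Qed.

Lemma row_free_monomial_rows n (q : 'I_n -> 'rV[R]_d) :
  (n <= 2 * D)%N -> injective q -> row_free (\matrix_(i < n) monomial_row (q i)).
Proof.
move=> n_small q_inj.
have [c cE] := fin_all_exists (fun i => lagrange_in_monomial_span i n_small q_inj).
apply/row_freeP; exists (\matrix_(k, i) c i k 0).
apply/matrixP => j i; rewrite [RHS]mxE -cE !mxE.
by apply: eq_bigr => k _; rewrite !mxE.
Qed.

Lemma row_free_monomial_nth n (s : seq 'rV[R]_d) :
  size s = n -> (n <= 2 * D)%N -> uniq s -> row_free (\matrix_(i < n) monomial_row (nth 0 s i)).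
Proof.
move=> s_size n_small s_uniq; apply: row_free_monomial_rows n_small _ => i j /eqP.
by rewrite nth_uniq ?s_size // => /eqP/val_inj.
Qed.

End MonomialInterpolation.

Lemma derive_along (R : realType) (V W : normedModType R) (F : V -> W) (u : V) :
  'D_u F 0 = 'D_1 (fun t : R => F (t *: u)) 0.
Proof.
rewrite /derive; suff -> : (fun h : R => h^-1 *: ((F \o shift 0) (h *: u) - F 0)) =
    (fun h : R => h^-1 *: (((fun t : R => F (t *: u)) \o shift 0) (h *: 1) - F (0 *: u))) by [].
by apply/funext => h /=; rewrite scale0r !addr0 [h *: 1]mulr1.
Qed.

Lemma palpha_differentiable (R : realType) (d D : nat) (a : mindex d D) (x : 'rV[R]_d) :
  differentiable (palpha a) x.
Proof.
rewrite (_ : palpha a = \prod_i (fun y : 'rV[R]_d => y 0 i) ^+ val (val a i)); last first.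
  by rewrite fct_prodE; apply/funext => y; apply: eq_bigr => i _; rewrite exprfctE.
elim/big_ind: _ => [|f g|i _]; [exact: differentiable_cst|exact: differentiableM|].
case: (val (val a i)) => [|n]; first exact: differentiable_cst.
exact/differentiableX/differentiable_coord.
Qed.

Section PerturbedOrbit.
Variables (R : realType) (d D : nat) (phi : 'rV[R]_d -> 'rV[R]_d).
Hypothesis phi_diff : forall x, differentiable phi x.

Definition pert_poly (c : 'rV[R]_(Dalpha d D)) (x : 'rV[R]_d) : R :=
  \sum_(a : mindex d D) c 0 (enum_rank a) * palpha a x.

Lemma pert_poly_differentiable c x : differentiable (pert_poly c) x.
Proof.
rewrite (_ : pert_poly c = \sum_a (cst (c 0 (enum_rank a)) * palpha a)); last by rewrite fct_sumE.
elim/big_ind: _ => [|f g|a _]; [exact: differentiable_cst|exact: differentiableD|].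
exact/differentiableM/palpha_differentiable/differentiable_cst.
Qed.

Lemma phic_scale c (t : R) x : phic phi (t *: c) x = phi x + (t * pert_poly c x) *: e1 R d.
Proof.
rewrite /phic /pert_poly mulr_sumr; congr (_ + _ *: _).
by apply: eq_bigr => a _; rewrite mxE mulrA.
Qed.

Lemma pert_poly_delta k x : pert_poly (delta_mx 0 k) x = monomial_row D x 0 k.
Proof.
rewrite /pert_poly (bigD1 (enum_val k)) //= enum_valK !mxE !eqxx mul1r big1 ?addr0 // => a ak.
by rewrite mxE eqxx -(inj_eq enum_val_inj) enum_rankK (negbTE ak) mul0r.
Qed.

Variables (c : 'rV[R]_(Dalpha d D)) (z : 'rV[R]_d).

Definition pert_orbit (j : nat) (t : R) := iter j (phic phi (t *: c)) z.

Lemma pert_orbit_at0 j : pert_orbit j 0 = iter j phi z.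
Proof.
rewrite /pert_orbit (_ : phic phi (0 *: c) = phi) //.
by apply/funext => x; rewrite phic_scale mul0r scale0r addr0.
Qed.

Lemma pert_orbitS j :
  pert_orbit j.+1 = phi \o pert_orbit j + (fun t => (t * pert_poly c (pert_orbit j t)) *: e1 R d).
Proof. by apply/funext => t; rewrite /pert_orbit iterS phic_scale. Qed.

Lemma pert_orbit_differentiable j t : differentiable (pert_orbit j) t.
Proof.
elim: j t => [|j IH] t; first exact: differentiable_cst.
rewrite pert_orbitS; apply: differentiableD; first exact: differentiable_comp.
apply/differentiableZl/differentiableM => //.
by apply: differentiable_comp => //; exact: pert_poly_differentiable.
Qed.

Lemma derive_pert_orbitS j :
  'D_1 (pert_orbit j.+1) 0 =
    'd phi (iter j phi z) ('D_1 (pert_orbit j) 0) + pert_poly c (iter j phi z) *: e1 R d.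
Proof.
have poly_diff : differentiable (fun t : R => t * pert_poly c (pert_orbit j t)) 0.
  rewrite (_ : (fun t : R => t * _) = id * (pert_poly c \o pert_orbit j)) //.
  apply: differentiableM => //.
  by apply: differentiable_comp; [exact: pert_orbit_differentiable|exact: pert_poly_differentiable].
rewrite pert_orbitS deriveD; last 2 first.
- by apply/diff_derivable/differentiable_comp => //; exact: pert_orbit_differentiable.
- exact/diff_derivable/differentiableZl.
rewrite -pert_orbit_at0; congr (_ + _).
  have orbit_diff := pert_orbit_differentiable j 0.
  rewrite deriveE; last exact: differentiable_comp.
  by rewrite diff_comp ?deriveE.
rewrite deriveE; last exact: differentiableZl.
rewrite diffZl //= -deriveE //.
rewrite (_ : (fun t : R => t * _) = id * (pert_poly c \o pert_orbit j)) //.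
rewrite deriveM //; last first.
  apply/diff_derivable/differentiable_comp; first exact: pert_orbit_differentiable.
  exact: pert_poly_differentiable.
by rewrite derive_id /= scale0r add0r [_ *: 1]mulr1.
Qed.

End PerturbedOrbit.

Section OrbitMatrix.
Variables (R : realType) (d D : nat) (hd : (0 < d)%N) (phi : 'rV[R]_d -> 'rV[R]_d).
Hypothesis phi_diff : forall x, differentiable phi x.
Variable z : 'rV[R]_d.

Let i0 : 'I_d := Ordinal hd.

Lemma pi1E (x : 'rV[R]_d) : pi1 x = x 0 i0.
Proof.
rewrite /pi1 (bigD1 i0) //= big1 ?addr0 // => i /andP[i_0 i_i0].
by case/eqP: i_i0; apply: val_inj; apply/eqP.
Qed.

Definition pert_deriv_row j (i : 'I_d) : 'rV[R]_(Dalpha d D) :=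
  \row_k ('D_1 (pert_orbit phi (delta_mx 0 k) z j) 0) 0 i.

Lemma pert_deriv_rowS j i : pert_deriv_row j.+1 i =
  \sum_l ('d phi (iter j phi z) (delta_mx 0 l)) 0 i *: pert_deriv_row j l
  + e1 R d 0 i *: monomial_row D (iter j phi z).
Proof.
apply/rowP => k; rewrite [LHS]mxE derive_pert_orbitS //.
rewrite [in LHS](row_sum_delta ('D_1 (pert_orbit phi (delta_mx 0 k) z j) 0)) linear_sum.
rewrite pert_poly_delta !mxE summxE; congr (_ + _); last by rewrite mulrC.
by rewrite summxE; apply: eq_bigr => l _; rewrite linearZ !mxE mulrC.
Qed.

Definition orbit_monomial_space j := (\sum_(l < j) <<monomial_row D (iter l phi z)>>)%MS.

Lemma pert_deriv_row_sub j i : (pert_deriv_row j i <= orbit_monomial_space j)%MS.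
Proof.
elim: j i => [|j IH] i.
  rewrite (_ : pert_deriv_row 0 i = 0) ?sub0mx //.
  by apply/rowP => k; rewrite !mxE derive_cst mxE.
rewrite pert_deriv_rowS /orbit_monomial_space big_ord_recr /=; apply: addmx_sub.
  apply: summx_sub => l _; apply: scalemx_sub.
  exact: submx_trans (IH l) (addsmxSl _ _).
by apply: scalemx_sub; apply: submx_trans (addsmxSr _ _); rewrite genmxE.
Qed.

Lemma row_Gmat n (j : 'I_n) : row j (Gmat D phi n z) = pert_deriv_row j.+1 i0.
Proof.
apply/rowP => k; rewrite !mxE derive_along.
rewrite derive_mx ?mxE; last exact/diff_derivable/pert_orbit_differentiable.
by under eq_fun do rewrite pi1E.
Qed.

Lemma Gmat_lower_unitri n :
  lower_unitri (Gmat D phi n z) (\matrix_(l < n) monomial_row D (iter l phi z)).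
Proof.
move=> j; rewrite row_Gmat pert_deriv_rowS rowK mxE eqxx scale1r addrK.
apply: summx_sub => l _; apply: scalemx_sub; apply: submx_trans (pert_deriv_row_sub j l) _.
apply/sumsmx_subP => m _; apply: (sumsmx_sup (widen_ord (ltnW (ltn_ord j)) m)) => //=.
by rewrite rowK.
Qed.

End OrbitMatrix.

Section OrbitRows.
Variables (R : realType) (d D : nat) (phi : 'rV[R]_d -> 'rV[R]_d).

Lemma size_orbit_seq n x : size (orbit_seq phi n x) = n.
Proof. by rewrite size_map size_iota. Qed.

Lemma orbit_rows_nth n x :
  \matrix_(l < n) monomial_row D (iter l phi x) =
  \matrix_(l < n) monomial_row D (nth 0 (orbit_seq phi n x) l).
Proof. by apply/matrixP => l k; rewrite !mxE (nth_map 0%N) ?size_iota // nth_iota. Qed.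

Lemma row_free_orbit_rows n x : (n <= 2 * D)%N -> uniq (orbit_seq phi n x) ->
  row_free (\matrix_(l < n) monomial_row D (iter l phi x)).
Proof. by rewrite orbit_rows_nth; apply: row_free_monomial_nth; rewrite size_orbit_seq. Qed.

Lemma row_free_orbit_rows_col_mx n k x y : (n + k <= 2 * D)%N ->
  uniq (orbit_seq phi n x ++ orbit_seq phi k y) ->
  row_free (col_mx (\matrix_(l < n) monomial_row D (iter l phi x))
                   (\matrix_(l < k) monomial_row D (iter l phi y))).
Proof.
move=> nk_small s_uniq.
rewrite (_ : col_mx _ _ = \matrix_(i < n + k) monomial_row D (nth 0 (orbit_seq phi n x ++ orbit_seq phi k y) i)).
  by apply: row_free_monomial_nth s_uniq; rewrite // size_cat !size_orbit_seq.
rewrite !orbit_rows_nth; apply/matrixP => i c; rewrite !mxE nth_cat size_orbit_seq.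
by case: splitP => [i1|i2] ->; rewrite !mxE ?ltn_ord ?addKn.
Qed.

End OrbitRows.

Theorem lemma11 (R : realType) (d D : nat) (hd : (0 < d)%N)
  (phi : 'rV[R]_d -> 'rV[R]_d) (hphi : C2_diffeo phi) (x1 y1 : 'rV[R]_d) :
  [/\ uniq (orbit_seq phi (D - 1) x1 ++ orbit_seq phi (D - 1) y1) ->
        row_free (col_mx (Vmat D phi x1) (Vmat D phi y1)),
      forall (k : nat) (hk : (k <= D - 1)%N),
        uniq (orbit_seq phi (D - 1) x1 ++ orbit_seq phi k y1) ->
        row_free (col_mx (Vmat D phi x1) (mfirst phi hk y1))
    & forall Dp : nat, (Dp <= 2 * D)%N ->
        uniq (orbit_seq phi (Dp - 1) x1) ->
        row_free (Gmat D phi (Dp - 1) x1)].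
Proof.
have [_ [_ _ [phi_partial partial_cont _ _] _]] := hphi.
have phi_diff := continuous_partials_differentiable phi_partial partial_cont.
have unitri n z := @Gmat_lower_unitri _ _ D hd _ phi_diff z n.
split => [orbits_uniq | k hk orbits_uniq | Dp Dp_small orbit_uniq].
- apply: row_free_lower_unitri (lower_unitri_col_mx (unitri _ x1) (unitri _ y1)) _.
  by apply: row_free_orbit_rows_col_mx orbits_uniq; lia.
- have prefix_rows : \matrix_(i < k) row (widen_ord hk i) (\matrix_(l < D - 1) monomial_row D (iter l phi y1))
      = \matrix_(l < k) monomial_row D (iter l phi y1).
    by apply/matrixP => i c; rewrite !mxE.
  have := lower_unitri_col_mx (unitri (D - 1)%N x1) (lower_unitri_prefix hk (unitri _ y1)).
  rewrite prefix_rows => /row_free_lower_unitri; apply.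
  by apply: row_free_orbit_rows_col_mx orbits_uniq; lia.
- apply: row_free_lower_unitri (unitri _ x1) _.
  by apply: row_free_orbit_rows orbit_uniq; lia.
Qed.
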